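(* An element $b=\sum_{i=0}^{k-1}b_iz^i\in B_k$ stabilizes $dT$ under the coadjoint action if and only if $b_i\in\mathfrak{h}_i$ for all $i=1,\dots,k-1$.
   Context: Let $\mathfrak{g}=\mathfrak{gl}_n(\mathbb{C})$, $\mathfrak{t}$ a Cartan subalgebra, $k>1$, $T=\sum_{i=1}^{k-1}T_iz^{-i}$, $T_i\in\mathfrak{t}$, $T_{k-1}\ne0$, $dT=\sum_{i=1}^{k-1}(-iT_i)z^{-i-1}dz$. $B_k=\{\sum_{i=0}^{k-1}b_iz^i:b_0=1,b_i\in\mathfrak{g}\}\subset\mathrm{GL}_n(\mathbb{C}[z]/(z^k))$; identify $\mathfrak{b}_k^*$ with $\{\sum_{i=1}^{k-1}X_iz^{-i-1}dz:X_i\in\mathfrak{g}\}$ via $\mathrm{res}_{z=0}\mathrm{tr}$; the coadjoint action is $\mathrm{Ad}^*_bB=$ the part of $bBb^{-1}$ in degrees $z^{-i-1}dz$, $1\le i\le k-1$. For $i=0,\dots,k-2$ put $\mathfrak{h}_i=\bigcap_{j=i+1}^{k-1}\ker\mathrm{ad}_{T_j}$, and $\mathfrak{h}_{k-1}=\mathfrak{g}$. *)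

From HB Require Import structures.
From mathcomp Require Import all_boot all_order all_algebra.
From mathcomp Require Import complex.
From mathcomp Require Import reals.
Set Implicit Arguments. Unset Strict Implicit. Unset Printing Implicit Defensive.
Import Order.TTheory GRing.Theory Num.Theory.
Local Open Scope ring_scope.

Section Defs.
Variables (R : realType) (n : nat).
Local Notation C := (R[i]).
Local Notation M := 'M[C]_n.

(* Coefficients b_0, b_1, ... of an element of B_k; only b_0..b_{k-1} matter. *)
(* Inverse of b in GL_n(C[z]/(z^k)) (when b_0 = 1): coefficients c_0, c_1, ...
   determined by  sum_{p+q=m} b_p c_q = delta_{m,0}. *)
Fixpoint tinv_seq (b : nat -> M) (m : nat) : seq M :=
  match m with
  | 0 => [:: 1%:M]
  | m'.+1 => let s := tinv_seq b m' in
             rcons s (- \sum_(1 <= p < m'.+2) b p *m nth 0 s (m'.+1 - p))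
  end.
Definition tinv (b : nat -> M) (q : nat) : M := nth 0 (tinv_seq b q) q.

(* dT = sum_{i=1}^{k-1} (-i T_i) z^{-i-1} dz : coefficient of z^{-i-1} dz *)
Definition dT (T : nat -> M) (i : nat) : M := - (i%:R *: T i).

(* coefficient of z^{-j-1} dz (1 <= j <= k-1) of Ad*_b B = part of b B b^{-1},
   where B = sum_{i=1}^{k-1} X_i z^{-i-1} dz. *)
Definition coad (k : nat) (b : nat -> M) (X : nat -> M) (j : nat) : M :=
  \sum_(1 <= i < k | (j <= i)%N)
     \sum_(p < (i - j).+1) b p *m X i *m tinv b (i - j - p).

Definition stabilizes (k : nat) (b : nat -> M) (B : nat -> M) : Prop :=
  forall j, (1 <= j < k)%N -> coad k b B j = B j.

(* h_i = intersection over j = i+1..k-1 of ker ad_{T_j}; for i = k-1 this is g *)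
Definition h_ (k : nat) (T : nat -> M) (i : nat) (X : M) : Prop :=
  forall j, (i < j < k)%N -> X *m T j - T j *m X = 0.

(* X belongs to the Cartan subalgebra t = P (diagonal matrices) P^{-1} *)
Definition in_cartan (P : M) (X : M) : Prop := is_diag_mx (invmx P *m X *m P).

End Defs.

From mathcomp Require Import all_boot all_order all_algebra.
From mathcomp Require Import complex.
From mathcomp Require Import reals.
From mathcomp Require Import zify.
Set Implicit Arguments.
Unset Strict Implicit.
Unset Printing Implicit Defensive.
Import Order.TTheory GRing.Theory Num.Theory.
Local Open Scope ring_scope.

(* Write b^-1 = sum_m c_m z^m with c_0 = 1.  Then Ad*_b B - B = [b, B] b^-1,
   and since c_0 = 1 this is a unitriangular system: b stabilizes dT iff every
   coefficient E_l = sum_p [b_p, dT_(l+p)] (1 <= l < k) of [b, dT] vanishes.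
   In a basis diagonalizing the T_m, the (a,c) entry of E_l is
   -sum_p beta_p delta_(l+p), where beta_p is the (a,c) entry of b_p and
   delta_m = m (t_m(c) - t_m(a)).  Descending from the largest m with
   delta_m <> 0, these equations force beta_p delta_m = 0 for 1 <= p < m < k,
   that is [b_p, T_m] = 0.  Conversely, b_p in h_p kills every term of E_l. *)

Lemma sum_triangle_antidiag (V : nmodType) (F : nat -> nat -> V) K :
  \sum_(m < K) \sum_(p < K - m) F p m =
  \sum_(s < K) \sum_(p < s.+1) F p (s - p)%N.
Proof.
elim: K => [|K IH]; first by rewrite !big_ord0.
rewrite [RHS]big_ord_recr /= -IH.
under eq_bigr => m _ do rewrite subSn -1?ltnS // big_ord_recr /=.
rewrite big_split /= big_ord_recr /= subnn big_ord0 addr0; congr (_ + _).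
rewrite (reindex_inj rev_ord_inj) /=; apply: eq_bigr => m _.
by rewrite subSS subKn // -ltnS.
Qed.

Section Correlation.
Variables (F : idomainType) (k : nat) (be d : nat -> F).
Hypothesis be0_mul : forall m, be 0%N * d m = 0.
Hypothesis corr_eq0 :
  forall l, (1 <= l < k)%N -> \sum_(p < k - l) be p * d (l + p)%N = 0.

Lemma corr_eq0_below_max_support m0 :
  (m0 < k)%N -> d m0 != 0 -> (forall m, (m0 < m < k)%N -> d m = 0) ->
  forall p, (1 <= p < m0)%N -> be p = 0.
Proof.
move=> m0k dm0 dm_gt; elim/ltn_ind=> p IH hp.
have hpk : (p < k - (m0 - p))%N by lia.
have /corr_eq0 : (1 <= m0 - p < k)%N by lia.
rewrite (bigD1 (Ordinal hpk)) //= big1 ?addr0 => [|q /= qp].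
  rewrite subnK; last by case/andP: hp => _ /ltnW.
  by move/eqP; rewrite mulf_eq0 (negPf dm0) orbF => /eqP.
have [q_lt_p|p_lt_q|q_eq_p] := ltngtP q p.
- have [->|q_gt0] := posnP q; first exact: be0_mul.
  by rewrite IH ?mul0r // q_gt0 (ltn_trans q_lt_p) //; case/andP: hp.
- by rewrite dm_gt ?mulr0 //; have := ltn_ord q; lia.
- by move: qp; rewrite -val_eqE /= q_eq_p eqxx.
Qed.

Lemma corr_mul_eq0 i j : (1 <= i)%N -> (i < j < k)%N -> be i * d j = 0.
Proof.
move=> i_gt0 /andP[ij jk].
have [->|dj] := eqVneq (d j) 0; first by rewrite mulr0.
pose nz m := (m < k)%N && (d m != 0).
have nz_j : nz j by rewrite /nz jk dj.
have nz_le m : nz m -> (m <= k)%N by case/andP=> /ltnW.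
have [m0 /andP[m0k dm0] m0_max] := ex_maxnP (ex_intro nz j nz_j) nz_le.
have jm0 := m0_max j nz_j.
rewrite (@corr_eq0_below_max_support m0) ?mul0r ?i_gt0 ?(leq_trans ij) //.
move=> m /andP[m0m mk].
by apply/eqP; apply: contraTT m0m => dm; rewrite -leqNgt m0_max // /nz mk.
Qed.

End Correlation.

Lemma comm_diag_mxE (F : comNzRingType) n (A D : 'M[F]_n) a c :
  is_diag_mx D -> (A *m D - D *m A) a c = A a c * (D c c - D a a).
Proof.
case/diag_mxP=> d ->; rewrite mul_mx_diag mul_diag_mx !mxE !eqxx !mulr1n.
by rewrite mulrBr [d 0 a * _]mulrC.
Qed.

Section Conjugation.
Variables (F : fieldType) (n : nat) (P : 'M[F]_n).
Hypothesis P_unit : P \in unitmx.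

Lemma conjVmxM (A B : 'M[F]_n) :
  conjmx (invmx P) (A *m B) = conjmx (invmx P) A *m conjmx (invmx P) B.
Proof. by rewrite !conjVmx // !mulmxA mulmxK. Qed.

Lemma conjVmx_comm (A B : 'M[F]_n) :
  conjmx (invmx P) (A *m B - B *m A) =
  conjmx (invmx P) A *m conjmx (invmx P) B -
  conjmx (invmx P) B *m conjmx (invmx P) A.
Proof. by rewrite -!conjVmxM !conjVmx // mulmxBr mulmxBl. Qed.

Lemma conjVmx_inj : injective (conjmx (invmx P)).
Proof. exact: can_inj (fun A => conjmxVK A P_unit). Qed.

End Conjugation.

Section TruncatedInverse.
Variables (R : realType) (n : nat) (b : nat -> 'M[R[i]]_n).

Lemma size_tinv_seq m : size (tinv_seq b m) = m.+1.
Proof. by elim: m => //= m IH; rewrite size_rcons IH. Qed.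

Lemma nth_tinv_seq m q : (q <= m)%N -> nth 0 (tinv_seq b m) q = tinv b q.
Proof.
elim: m => [|m IH]; first by rewrite leqn0 => /eqP ->.
rewrite leq_eqVlt => /predU1P[-> //|lt_qm].
by rewrite /= nth_rcons size_tinv_seq lt_qm IH.
Qed.

Lemma tinvS m : tinv b m.+1 = - \sum_(1 <= p < m.+2) b p *m tinv b (m.+1 - p).
Proof.
rewrite /tinv /= nth_rcons size_tinv_seq ltnn eqxx; congr (- _).
by apply: eq_big_nat => p /andP[p_gt0 _]; rewrite nth_tinv_seq //; lia.
Qed.

Hypothesis b0 : b 0%N = 1%:M.

Lemma mul_tinv s :
  \sum_(p < s.+1) b p *m tinv b (s - p) = if s == 0%N then 1%:M else 0.
Proof.
case: s => [|s]; first by rewrite big_ord1 b0 mul1mx.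
rewrite -(big_mkord xpredT (fun p => b p *m tinv b (s.+1 - p))) big_ltn //.
by rewrite b0 mul1mx subn0 tinvS addNr.
Qed.

End TruncatedInverse.

Section Coadjoint.
Variables (R : realType) (n k : nat) (b X : nat -> 'M[R[i]]_n).
Hypothesis b0 : b 0%N = 1%:M.

(* Coefficient of z^(-l-1) dz in b B - B b, for B = sum_i X_i z^(-i-1) dz. *)
Definition bracket_coef (l : nat) : 'M[R[i]]_n :=
  \sum_(p < k - l) (b p *m X (l + p) - X (l + p) *m b p).

Lemma coadE j : (1 <= j < k)%N ->
  coad k b X j =
  \sum_(s < k - j) \sum_(p < s.+1) b p *m X (j + s) *m tinv b (s - p).
Proof.
case/andP=> j_gt0 /ltnW jk; rewrite /coad big_mkcond (big_cat_nat j_gt0 jk) /=.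
rewrite big_nat_cond big1 ?add0r => [|i /andP[/andP[_ ij] _]]; last first.
  by rewrite leqNgt ij.
rewrite -{1}(add0n j) big_addn big_mkord; apply: eq_bigr => s _.
by rewrite leq_addl addnK addnC.
Qed.

Lemma coad_subr j : (1 <= j < k)%N ->
  coad k b X j - X j = \sum_(m < k - j) bracket_coef (j + m) *m tinv b m.
Proof.
move=> hj; have [j_gt0 jk] := andP hj.
under eq_bigr => m _ do rewrite /bracket_coef subnDA mulmx_suml.
rewrite (sum_triangle_antidiag
  (fun p m => (b p *m X (j + m + p) - X (j + m + p) *m b p) *m tinv b m)).
under eq_bigr => s _ do under eq_bigr => p _ do
  rewrite -addnA subnK ?(ltnSE (ltn_ord p)) // mulmxBl.
under eq_bigr => s _ do rewrite sumrB.
rewrite sumrB coadE //; congr (_ - _).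
under eq_bigr => s _ do under eq_bigr => p _ do rewrite -mulmxA.
under eq_bigr => s _ do rewrite -mulmx_sumr mul_tinv //.
rewrite -(subnSK jk) big_ord_recl /= addn0 mulmx1 big1 ?addr0 // => s _.
by rewrite mulmx0.
Qed.

Lemma stabilizesP :
  stabilizes k b X <-> forall l, (1 <= l < k)%N -> bracket_coef l = 0.
Proof.
split=> [stab | bracket0 j hj]; last first.
  apply/eqP; rewrite -subr_eq0 coad_subr // big1 // => m _.
  by rewrite bracket0 ?mul0mx //; have := ltn_ord m; lia.
suff bracket0 t l : (1 <= l < k)%N -> (k - l <= t)%N -> bracket_coef l = 0.
  by move=> l hl; exact: (bracket0 (k - l)%N l hl (leqnn _)).
elim: t l => [|t IH] l hl klt; first by move: hl klt; lia.
have := coad_subr hl; rewrite stab // subrr -(subnSK (proj2 (andP hl))).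
rewrite big_ord_recl big1 ?addr0 ?addn0 ?mulmx1 => [<- //|m _].
by rewrite IH ?mul0mx // lift0; have := ltn_ord m; lia.
Qed.

End Coadjoint.

Section Stabilizer.
Variables (R : realType) (n k : nat) (P : 'M[R[i]]_n) (T b : nat -> 'M[R[i]]_n).
Hypothesis b0 : b 0%N = 1%:M.

Lemma comm_dT (B : 'M[R[i]]_n) m :
  B *m dT T m - dT T m *m B = - (m%:R *: (B *m T m - T m *m B)).
Proof.
by rewrite /dT mulmxN mulNmx opprK -scalemxAr -scalemxAl scalerBr opprB addrC.
Qed.

Lemma h_stabilizes :
  (forall i, (1 <= i < k)%N -> h_ k T i (b i)) -> stabilizes k b (dT T).
Proof.
move=> b_h; apply/(stabilizesP k (dT T) b0) => l /andP[l_gt0 lk].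
rewrite /bracket_coef big1 // => p _; rewrite comm_dT.
have [->|p_gt0] := posnP p; first by rewrite b0 mul1mx mulmx1 subrr scaler0 oppr0.
by rewrite b_h ?scaler0 ?oppr0 //; have := ltn_ord p; lia.
Qed.

Hypothesis P_unit : P \in unitmx.
Hypothesis T_cartan : forall i, (1 <= i < k)%N -> in_cartan P (T i).

Local Notation cj := (conjmx (invmx P)).

Lemma conj_T_diag m : (1 <= m < k)%N -> is_diag_mx (cj (T m)).
Proof. by move=> hm; rewrite conjVmx //; exact: T_cartan. Qed.

Lemma conj_comm_dT_entry (B : 'M[R[i]]_n) m a c : (1 <= m < k)%N ->
  (cj (B *m dT T m - dT T m *m B)) a c =
  - ((cj B) a c * (m%:R * (cj (T m) c c - cj (T m) a a))).
Proof.
move=> hm; rewrite comm_dT conjVmx // mulmxN mulNmx -scalemxAr -scalemxAl.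
rewrite -conjVmx // conjVmx_comm // mxE [in LHS]mxE comm_diag_mxE ?conj_T_diag //.
by rewrite mulrCA.
Qed.

Lemma stabilizes_h :
  stabilizes k b (dT T) -> forall i, (1 <= i < k)%N -> h_ k T i (b i).
Proof.
move/(stabilizesP k (dT T) b0) => bracket0 i /andP[i_gt0 _] j hj.
have j_gt0 : (0 < j)%N by case/andP: hj; lia.
apply: (conjVmx_inj P_unit); rewrite conjVmx_comm // conjmx0.
have Tj_diag : is_diag_mx (cj (T j)) by apply: conj_T_diag; move: hj; lia.
apply/matrixP => a c; rewrite [RHS]mxE comm_diag_mxE //.
pose be p := cj (b p) a c.
pose d m := m%:R * (cj (T m) c c - cj (T m) a a).
have be0_mul m : be 0%N * d m = 0.
  rewrite /be /d b0 conjVmx // mulmx1 mulVmx // mxE.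
  by case: eqP => [->|_]; rewrite ?subrr ?mulr0 ?mul0r.
have corr_eq0 l : (1 <= l < k)%N -> \sum_(p < k - l) be p * d (l + p)%N = 0.
  move=> hl; transitivity (- cj (bracket_coef k b (dT T) l) a c); last first.
    by rewrite bracket0 // conjmx0 mxE oppr0.
  rewrite /bracket_coef conjVmx // mulmx_sumr mulmx_suml summxE -sumrN.
  apply: eq_bigr => p _; rewrite -conjVmx // conj_comm_dT_entry ?opprK //.
  by have := ltn_ord p; move: hl; lia.
have := corr_mul_eq0 be0_mul corr_eq0 i_gt0 hj.
rewrite /be /d mulrCA => /eqP.
by rewrite mulf_eq0 pnatr_eq0 gtn_eqF //=; exact/eqP.
Qed.

End Stabilizer.

Theorem lemma3p4 (R : realType) (n k : nat) (P : 'M[R[i]]_n)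
    (T : nat -> 'M[R[i]]_n) :
  (1 < k)%N ->
  P \in unitmx ->
  (forall i, (1 <= i < k)%N -> in_cartan P (T i)) ->
  T k.-1 != 0 ->
  forall b : nat -> 'M[R[i]]_n, b 0%N = 1%:M ->
  (stabilizes k b (dT T) <-> (forall i, (1 <= i < k)%N -> h_ k T i (b i))).
Proof.
move=> _ P_unit T_cartan _ b b0; split.
- exact: stabilizes_h b0 P_unit T_cartan.
- exact: h_stabilizes b0.
Qed.
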